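(* For every $n\ge1$, the map $e\mapsto d(e)$ is a bijection from $\mathbf{I}_n(021)$ onto $\mathcal{A}_n$, and for every $e\in\mathbf{I}_n(021)$, $$(\mathrm{dist},\mathrm{asc},\mathrm{zero},\mathrm{ema})(e)=(\mathrm{turn},\mathrm{segment},\mathrm{red},\mathrm{return})(d(e)).$$
   Context: $\mathbf{I}_n=\{(e_1,\dots,e_n): 0\le e_i\le i-1\}$; $\mathbf I_n(021)$ is the set of $e\in\mathbf I_n$ containing no indices $i<j<k$ with $e_i<e_k<e_j$ (equivalently, whose positive entries are weakly increasing). For $e\in\mathbf I_n$: $\mathrm{dist}(e)$ is the number of distinct positive values among the entries; $\mathrm{asc}(e)=|\{i\in[n-1]:e_i<e_{i+1}\}|$; $\mathrm{zero}(e)=|\{i:e_i=0\}|$; $\mathrm{ema}(e)=|\{i:e_i=i-1\}|$. A two-colored Dyck path of length $n$ is a lattice path from $(0,0)$ to $(n,n)$ with unit east and north steps never going above $y=x$, each east step colored black or red; it is encoded by $D=d_1\cdots d_n$ where $d_i$ (the height of the $i$-th east step) is the number of north steps before it, so $0\le d_1\le\dots\le d_n$, $d_i\le i-1$, together with the colors. The outline of $e\in\mathbf I_n(021)$ is the two-colored Dyck path $d(e)$ with $d_i=e_i$ and step $i$ black if $e_i\ne0$, and $d_i=\max\{e_1,\dots,e_i\}$ and step $i$ red if $e_i=0$. $\mathcal{A}_n$ is the set of two-colored Dyck paths of length $n$ such that (c-1) all east steps of height $0$ are red and (c-2) the first east step of each positive height is black. For a two-colored Dyck path $D$: $\mathrm{turn}(D)$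 is the number of east steps immediately followed by a north step, minus $1$ (equivalently $|\{i\in[n-1]: d_i<d_{i+1}\}|$); $\mathrm{segment}(D)$ is the number of maximal runs of consecutive east steps (consecutive indices) that are all black and have the same height; $\mathrm{red}(D)$ is the number of red east steps; $\mathrm{return}(D)$ is the number of lattice points $(i,i)$, $1\le i\le n$, on $D$ (equivalently $|\{i\in[n]:d_i=i-1\}|$). *)

(* All sequences are 0-indexed: entry e_i of the paper (1-indexed)
   is [nth 0 e (i-1)]. *)
From mathcomp Require Import all_boot.
Set Implicit Arguments. Unset Strict Implicit. Unset Printing Implicit Defensive.

Definition invseq (n : nat) (e : seq nat) : bool :=
  (size e == n) && [forall i : 'I_n, nth 0 e i <= i].

Definition avoids021 (e : seq nat) : bool :=
  ~~ [exists i : 'I_(size e), exists j : 'I_(size e), exists k : 'I_(size e),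
       [&& i < j, j < k, nth 0 e i < nth 0 e k & nth 0 e k < nth 0 e j]].

Definition dist (e : seq nat) : nat := size (undup [seq x <- e | 0 < x]).
Definition asc (e : seq nat) : nat :=
  count (fun i => nth 0 e i < nth 0 e i.+1) (iota 0 (size e).-1).
Definition zero (e : seq nat) : nat := count (fun x => x == 0) e.
Definition ema (e : seq nat) : nat :=
  count (fun i => nth 0 e i == i) (iota 0 (size e)).

(* A two-colored Dyck path of length n is a seq of east steps (height, black?):
   heights d_1 <= ... <= d_n with d_i <= i-1 (1-indexed); [true] = black, [false] = red. *)
Definition step := (nat * bool)%type.
Definition ht (D : seq step) (i : nat) : nat := (nth (0, false) D i).1.
Definition black (D : seq step) (i : nat) : bool := (nth (0, false) D i).2.

Definition cdyck (n : nat) (D : seq step) : bool :=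
  [&& size D == n,
      [forall i : 'I_n, ht D i <= i] &
      sorted leq [seq s.1 | s <- D]].

(* A_n : (c-1) all east steps at height 0 are red,
         (c-2) the first east step of each positive height is black *)
Definition inA (n : nat) (D : seq step) : bool :=
  [&& cdyck n D,
      [forall i : 'I_n, (ht D i == 0) ==> ~~ black D i] &
      [forall i : 'I_n, [&& 0 < ht D i & (i == 0 :> nat) || (ht D i.-1 != ht D i)]
                          ==> black D i]].

Definition turn (D : seq step) : nat :=
  count (fun i => ht D i < ht D i.+1) (iota 0 (size D).-1).
(* number of maximal runs of consecutive black steps of the same height
   = number of black steps i that do not continue a run started at i-1 *)
Definition segment (D : seq step) : nat :=
  count (fun i => black D i &&
           ((i == 0) || ~~ black D i.-1 || (ht D i.-1 != ht D i)))
        (iota 0 (size D)).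
Definition red (D : seq step) : nat := count (fun s : step => ~~ s.2) D.
Definition return_ (D : seq step) : nat :=
  count (fun i => ht D i == i) (iota 0 (size D)).

Definition prefmax (e : seq nat) (i : nat) : nat := foldr maxn 0 (take i.+1 e).
Definition outline (e : seq nat) : seq step :=
  [seq (if nth 0 e i != 0 then (nth 0 e i, true) else (prefmax e i, false))
   | i <- iota 0 (size e)].

(* If the positive entries of e are weakly increasing (this is what avoiding 021
   means), the height of the i-th step of the outline is the prefix maximum
   max(e_1, ..., e_i), which equals e_i as soon as e_i > 0.  Conversely a black step
   records e_i and a red step records e_i = 0, so [unoutline] inverts the outline;
   conditions (c-1) and (c-2) say that only positive entries create new heights,
   which is exactly what makes prefix maxima of [unoutline D] reproduce the heights
   of D.  The statistics then match pointwise: distinct positive values are the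
   distinct heights above 0, i.e. the strict ascents of the height sequence; an
   ascent e_i < e_(i+1) forces e_(i+1) > 0 and starts a new black run; zero entries
   are red steps; and e_i = i - 1 exactly when the prefix maximum reaches the
   diagonal. *)

From mathcomp Require Import all_boot.
Set Implicit Arguments. Unset Strict Implicit. Unset Printing Implicit Defensive.

Lemma prefmax0 e : prefmax e 0 = nth 0 e 0.
Proof. by case: e => //= x s; rewrite /prefmax /= take0 maxn0. Qed.

Lemma prefmaxS e i : prefmax e i.+1 = maxn (prefmax e i) (nth 0 e i.+1).
Proof.
rewrite /prefmax; case: (ltnP i.+1 (size e)) => hi.
  by rewrite (take_nth 0 hi) -cats1 !foldrE big_cat big_seq1.
by rewrite !take_oversize ?(leq_trans hi) // nth_default // maxn0.
Qed.

Lemma leq_prefmax e i j : j <= i -> nth 0 e j <= prefmax e i.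
Proof.
elim: i => [|i IH]; first by rewrite leqn0 => /eqP ->; rewrite prefmax0.
rewrite prefmaxS leq_max leq_eqVlt ltnS => /orP [/eqP ->|/IH ->] //.
by rewrite leqnn orbT.
Qed.

Lemma prefmax_attained e i : exists2 j, j <= i & nth 0 e j = prefmax e i.
Proof.
elim: i => [|i [j hji hj]]; first by exists 0; rewrite ?prefmax0.
rewrite prefmaxS; case: (leqP (prefmax e i) (nth 0 e i.+1)) => h.
  by exists i.+1; rewrite ?(maxn_idPr h).
by exists j; rewrite ?(leq_trans hji) // (maxn_idPl (ltnW h)).
Qed.

Lemma prefmax_homo e : {homo prefmax e : i k / i <= k}.
Proof.
by move=> i k hik; have [j hji <-] := prefmax_attained e i; apply/leq_prefmax/(leq_trans hji).
Qed.

Lemma sorted_prefmax e m : sorted leq (map (prefmax e) (iota 0 m)).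
Proof. exact/(homo_sorted (@prefmax_homo e))/iota_sorted. Qed.

Lemma prefmax_leq_idx e i : (forall j, nth 0 e j <= j) -> prefmax e i <= i.
Proof. by move=> he; have [j hji <-] := prefmax_attained e i; apply: leq_trans (he j) hji. Qed.

Definition unoutline (D : seq step) : seq nat := [seq (if s.2 then s.1 else 0) | s <- D].

Lemma size_outline e : size (outline e) = size e.
Proof. by rewrite size_map size_iota. Qed.

Lemma nth_outline e i : i < size e -> nth (0, false) (outline e) i =
  if nth 0 e i != 0 then (nth 0 e i, true) else (prefmax e i, false).
Proof. by move=> hi; rewrite (nth_map 0) ?size_iota // nth_iota. Qed.

Lemma black_outline e i : i < size e -> black (outline e) i = (nth 0 e i != 0).
Proof. by move=> hi; rewrite /black nth_outline //; case: ifP. Qed.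

Lemma outlineK : cancel outline unoutline.
Proof.
move=> e; apply: (@eq_from_nth _ 0); first by rewrite size_map size_outline.
move=> i; rewrite size_map size_outline => hi.
by rewrite (nth_map (0, false)) ?size_outline // nth_outline //; case: eqP.
Qed.

Lemma red_outline e : red (outline e) = zero e.
Proof.
rewrite /zero /red /outline -[in RHS](mkseq_nth 0 e) /mkseq !count_map.
by apply: eq_count => i /=; case: eqP.
Qed.

Definition invseq021 (n : nat) (e : seq nat) : Prop :=
  [/\ size e = n, forall j, nth 0 e j <= j &
      forall j k, j < k -> k < n -> 0 < nth 0 e k -> nth 0 e j <= nth 0 e k].

Lemma invseq021P n e : invseq n e /\ avoids021 e <-> invseq021 n e.
Proof.
split=> [[/andP [/eqP hs /forallP hb] ha] | [hs hb hm]].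
- have he j : nth 0 e j <= j.
    by case: (ltnP j n) => hj; [exact: (hb (Ordinal hj)) | rewrite nth_default ?hs].
  have e0 : nth 0 e 0 = 0 by apply/eqP; rewrite -leqn0 he.
  split=> // j k hjk hk hpos; rewrite leqNgt; apply/negP => hlt.
  have hj0 : 0 < j by case: j hjk hlt => // _; rewrite e0.
  have hj : j < size e by rewrite hs (ltn_trans hjk).
  move/negP: ha; apply; apply/existsP; exists (Ordinal (ltn_trans hj0 hj)).
  apply/existsP; exists (Ordinal hj); apply/existsP; rewrite -hs in hk.
  by exists (Ordinal hk); rewrite /= e0 hj0 hjk hpos hlt.
- split.
    by apply/andP; split; [rewrite hs | apply/forallP => i; exact: hb].
  apply/negP => /existsP [i /existsP [j /existsP [k /and4P [_ hjk hik hkj]]]].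
  have := hm j k hjk; rewrite -hs ltn_ord => /(_ isT (leq_ltn_trans (leq0n _) hik)).
  by rewrite leqNgt hkj.
Qed.

Definition ascents (s : seq nat) : nat :=
  count (fun i => nth 0 s i < nth 0 s i.+1) (iota 0 (size s).-1).

Lemma ascents_cons2 x y s : ascents [:: x, y & s] = (x < y) + ascents (y :: s).
Proof. by rewrite /ascents /= -[1]/(1 + 0) iotaDl count_map. Qed.

Lemma size_undup_sorted s : sorted leq s -> s != [::] -> size (undup s) = (ascents s).+1.
Proof.
case: s => // x s /[swap] _; elim: s x => [|y s IH] x // /andP [hxy hs].
have hx : (x \in y :: s) = (x == y).
  rewrite in_cons; case: eqP => //= hne; apply/negP => xs; apply/hne/eqP.
  by move/allP/(_ x xs): (order_path_min leq_trans hs) => hyx; rewrite eqn_leq hxy.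
have -> : undup [:: x, y & s] = if x \in y :: s then undup (y :: s) else x :: undup (y :: s)
  by [].
rewrite hx ascents_cons2; case: (eqVneq x y) => [->|hne]; first by rewrite ltnn add0n (IH y hs).
by rewrite [size _]/= (IH y hs) ltn_neqAle hne hxy.
Qed.

Lemma turn_ascents D : turn D = ascents [seq s.1 | s <- D].
Proof.
rewrite /turn /ascents size_map; apply: eq_in_count => i.
rewrite mem_iota add0n /= ltn_predRL => hi.
by rewrite /ht !(nth_map (0, false)) // ltnW.
Qed.

Section Outline021.
Variables (n : nat) (e : seq nat).
Hypothesis he : invseq021 n e.

Lemma nth0_eq0 : nth 0 e 0 = 0.
Proof. by case: he => _ hb _; apply/eqP; rewrite -leqn0 hb. Qed.

Lemma prefmax_pos i : i < n -> 0 < nth 0 e i -> prefmax e i = nth 0 e i.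
Proof.
case: he => _ _ hm hi hp; apply/eqP; rewrite eqn_leq leq_prefmax // andbT.
have [j hji <-] := prefmax_attained e i.
by case: (ltngtP j i) hji => // [hj _ | -> _]; [exact: hm |].
Qed.

Lemma ht_outline i : i < n -> ht (outline e) i = prefmax e i.
Proof.
case: he => hs _ _ hi; rewrite /ht nth_outline ?hs //.
by have [-> | hp] := posnP (nth 0 e i); rewrite //= prefmax_pos.
Qed.

Lemma outline_heights : [seq s.1 | s <- outline e] = map (prefmax e) (iota 0 n).
Proof.
case: he => hs _ _; apply: (@eq_from_nth _ 0); first by rewrite !size_map !size_iota hs.
move=> i; rewrite size_map size_outline hs => hi.
rewrite (nth_map (0, false)) ?size_outline ?hs // -/(ht _ i) ht_outline //.
by rewrite (nth_map 0) ?size_iota // nth_iota.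
Qed.

Lemma cdyck_outline : cdyck n (outline e).
Proof.
case: he => hs hb _; apply/and3P; split; first by rewrite size_outline hs.
  by apply/forallP => i; rewrite ht_outline // prefmax_leq_idx.
by rewrite outline_heights sorted_prefmax.
Qed.

Lemma inA_outline : inA n (outline e).
Proof.
case: he => hs hb _; apply/and3P; split; first exact: cdyck_outline.
  apply/forallP => i; rewrite black_outline ?hs // ht_outline //.
  by apply/implyP => /eqP h0; rewrite negbK -leqn0 -{2}h0 leq_prefmax.
apply/forallP => i; rewrite black_outline ?hs // ht_outline //; apply/implyP.
case/andP => hp hnew; apply/eqP => hz.
(* a red step repeats the height of its predecessor *)
case: i hp hnew hz => [[|i] hi] /= hp hnew hz; first by rewrite prefmax0 hz in hp.
by move: hnew; rewrite (ht_outline (ltnW hi)) prefmaxS hz maxn0 eqxx.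
Qed.

Lemma return_outline : return_ (outline e) = ema e.
Proof.
case: he => hs hb _; rewrite /ema /return_ size_outline; apply: eq_in_count => i.
rewrite mem_iota add0n /= => hi; rewrite ht_outline -?hs //.
apply/eqP/eqP => [hpm | hei]; last first.
  by apply/eqP; rewrite eqn_leq prefmax_leq_idx // -{1}hei leq_prefmax.
have [j hji hj] := prefmax_attained e i.
have eji : j = i by apply/eqP; rewrite eqn_leq hji -{1}hpm -hj hb.
by rewrite -{1}eji hj.
Qed.

Lemma ascent_starts_segment i : i.+1 < n ->
  (nth 0 e i < nth 0 e i.+1) =
  black (outline e) i.+1 && (~~ black (outline e) i || (ht (outline e) i != ht (outline e) i.+1)).
Proof.
case: he => hs _ hm hi1; have hi : i < n := ltnW hi1.
rewrite !black_outline ?hs // !ht_outline //.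
have [-> | hp1] := posnP (nth 0 e i.+1); first by rewrite ltn0.
rewrite (prefmax_pos hi1 hp1) /=.
have [-> | hp] := posnP (nth 0 e i); first by rewrite hp1.
by rewrite (prefmax_pos hi hp) ltn_neqAle hm // andbT.
Qed.

Lemma segment_outline : 0 < n -> segment (outline e) = asc e.
Proof.
case: he => hs _ _ hn.
rewrite /asc /segment size_outline hs -{1}(prednK hn) /= black_outline ?hs // nth0_eq0 /=.
rewrite -[1]/(1 + 0) iotaDl count_map; apply: eq_in_count => i.
rewrite mem_iota add0n /= ltn_predRL => hi.
by rewrite /preim add1n ascent_starts_segment.
Qed.

Lemma mem_outline_heights x : 0 < n ->
  (x \in map (prefmax e) (iota 0 n)) = (x \in 0 :: [seq y <- e | 0 < y]).
Proof.
case: he => hs _ _ hn; rewrite in_cons mem_filter.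
apply/mapP/idP => [[i _ ->] | /orP [/eqP -> | /andP [hx /(nthP 0) [i hi hix]]]].
- have [j _ <-] := prefmax_attained e i.
  have [-> // | hp] := posnP (nth 0 e j).
  rewrite /= mem_nth // ltnNge.
  by apply: contraTN hp => /(nth_default 0) ->.
- exists 0; first by rewrite mem_iota add0n hn.
  by rewrite prefmax0 nth0_eq0.
- exists i; first by rewrite mem_iota add0n -hs.
  by rewrite -hix prefmax_pos -?hs ?hix.
Qed.

Lemma turn_outline : 0 < n -> turn (outline e) = dist e.
Proof.
move=> hn; have heights_nonempty : map (prefmax e) (iota 0 n) != [::].
  by rewrite -size_eq0 size_map size_iota -lt0n.
apply: succn_inj; rewrite turn_ascents outline_heights -size_undup_sorted ?sorted_prefmax //.
by rewrite (perm_size (perm_undup (mem_outline_heights ^~ hn))) /= mem_filter ltnn.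
Qed.
End Outline021.

Lemma nth_unoutline D i : nth 0 (unoutline D) i = if black D i then ht D i else 0.
Proof.
rewrite /black /ht; case: (ltnP i (size D)) => hi; first by rewrite (nth_map (0, false)).
by rewrite !nth_default ?size_map.
Qed.

Lemma cdyck_ht_homo n D j k : cdyck n D -> j <= k -> k < n -> ht D j <= ht D k.
Proof.
case/and3P => /eqP hs _ hsort hjk hk; have hj := leq_ltn_trans hjk hk.
have := sorted_leq_nth leq_trans leqnn 0 hsort.
rewrite size_map hs => /(_ j k hj hk hjk).
by rewrite /ht !(nth_map (0, false)) ?hs.
Qed.

Section Unoutline.
Variables (n : nat) (D : seq step).
Hypothesis hD : inA n D.

Lemma black_ht_pos i : i < n -> black D i -> 0 < ht D i.
Proof.
case/and3P: hD => _ /forallP c1 _ hi hb; rewrite lt0n.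
by apply: contraL hb; have := c1 (Ordinal hi); move/implyP.
Qed.

Lemma red_ht_repeat i : i.+1 < n -> ~~ black D i.+1 -> ht D i.+1 = ht D i.
Proof.
case/and3P: hD => hc _ /forallP c2 hi hr; apply/eqP; rewrite eqn_leq.
rewrite (cdyck_ht_homo hc (leqnSn i) hi) andbT; apply: contraR hr; rewrite -ltnNge => hlt.
apply: (implyP (c2 (Ordinal hi))) => /=.
by rewrite (leq_ltn_trans (leq0n _) hlt) /= neq_ltn hlt.
Qed.

Lemma prefmax_unoutline i : i < n -> prefmax (unoutline D) i = ht D i.
Proof.
case/and3P: hD => /[dup] hc /and3P [_ /forallP hh _] _ _.
elim: i => [|i IH] hi.
  have h0 : ht D 0 = 0 by apply/eqP; rewrite -leqn0; exact: (hh (Ordinal hi)).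
  by rewrite prefmax0 nth_unoutline h0; case: (black D 0).
rewrite prefmaxS (IH (ltnW hi)) nth_unoutline; case: ifP => hb.
  exact/maxn_idPr/(cdyck_ht_homo hc (leqnSn i) hi).
by rewrite maxn0 red_ht_repeat ?hb.
Qed.

Lemma invseq021_unoutline : invseq021 n (unoutline D).
Proof.
case/and3P: hD => /[dup] hc /and3P [/eqP hs /forallP hh _] _ _.
split; first by rewrite size_map.
  move=> j; rewrite nth_unoutline; case: ifP => // _.
  by case: (ltnP j n) => hj; [exact: (hh (Ordinal hj)) | rewrite /ht nth_default ?hs].
move=> j k hjk hk; rewrite !nth_unoutline; case: ifP => [_ _|]; last by rewrite ltn0.
by case: ifP => // _; apply: cdyck_ht_homo (ltnW hjk) hk.
Qed.

Lemma unoutlineK : outline (unoutline D) = D.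
Proof.
case/and3P: hD => /and3P [/eqP hs _ _] _ _.
apply: (@eq_from_nth _ (0, false)); first by rewrite size_outline size_map.
move=> i; rewrite size_outline size_map => hi.
rewrite nth_outline ?size_map // nth_unoutline prefmax_unoutline -?hs //.
have -> : nth (0, false) D i = (ht D i, black D i) by rewrite /ht /black; case: nth.
case hb : (black D i) => //=; by rewrite -lt0n black_ht_pos -?hs.
Qed.
End Unoutline.

Theorem lemma4p2 (n : nat) (hn : 1 <= n) :
  (* d maps I_n(021) into A_n *)
  (forall e, invseq n e -> avoids021 e -> inA n (outline e)) /\
  (* injective on I_n(021) *)
  (forall e1 e2, invseq n e1 -> avoids021 e1 -> invseq n e2 -> avoids021 e2 ->
     outline e1 = outline e2 -> e1 = e2) /\
  (* surjective onto A_n *)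
  (forall D, inA n D -> exists e, [/\ invseq n e, avoids021 e & outline e = D]) /\
  (* statistics *)
  (forall e, invseq n e -> avoids021 e ->
     (dist e, asc e, zero e, ema e) =
     (turn (outline e), segment (outline e), red (outline e), return_ (outline e))).
Proof.
have to021 e : invseq n e -> avoids021 e -> invseq021 n e by move=> hi ha; apply/invseq021P.
split; first by move=> e hi ha; exact/inA_outline/to021.
split; first by move=> e1 e2 _ _ _ _; exact: (can_inj outlineK).
split.
  move=> D hD; have [hi ha] := (invseq021P n (unoutline D)).2 (invseq021_unoutline hD).
  by exists (unoutline D); split; last exact: unoutlineK hD.
move=> e hi ha; have he := to021 e hi ha.
by rewrite (turn_outline he hn) (segment_outline he hn) red_outline (return_outline he).
Qed.
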